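(* (a) Let $T_1,\dots,T_n$ be nonvertical affine hyperplanes ($d$-dimensional affine subspaces) of $\mathbb{E}^{d+1}$, no two parallel, and for $i<j$ let $h_{ij}$ be the vertical projection into $\mathbb{E}^d$ of $T_i\cap T_j$. For each $i$ let $Q_i\in\mathbb{E}^d$ be the point such that $Q_i^*$ is the unique point at which a translate of $T_i$ is tangent to $S$. Then $\{h_{ij}\}$ is the Pythagorean arrangement $\mathcal{H}(\Psi;Q_1,\dots,Q_n)$ for some balanced, complete real, additive gain graph $\Psi$ on $\{1,\dots,n\}$. (b) Conversely, let $\Phi$ be a balanced, complete real, additive gain graph on $n$ vertices and let $Q_1,\dots,Q_n$ be distinct points of $\mathbb{E}^d$. Then there exist affine hyperplanes $T_1,\dots,T_n$ of $\mathbb{E}^{d+1}$ such that $\mathcal{H}(\Phi;Q_1,\dots,Q_n)$ equals the arrangement $\{h_{ij}\}$ derived from $T_1,\dots,T_n$ as in (a).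
   Context: $\mathbb{E}^d$ is embedded in $\mathbb{E}^{d+1}$ as $\{z=0\}$, where points of $\mathbb{E}^{d+1}$ have coordinates $(x_1,\dots,x_d,z)$. The fundamental paraboloid is $S:\ z=x_1^2+\cdots+x_d^2$. For $P\in\mathbb{E}^d$, $P^*$ is its vertical projection (lift) into $S$; vertical projection into $\mathbb{E}^d$ forgets $z$. A real, additive gain graph on $\{1,\dots,n\}$: finite graph (multiple edges allowed, every edge with two distinct endpoints) with gains $\phi(e;i,j)\in\mathbb{R}$, $\phi(e;j,i)=-\phi(e;i,j)$; it is balanced if every circle has gain sum $0$ read consistently, and complete if every two vertices are adjacent. With $\psi_{ij}(P)=d(P,Q_i)^2-d(P,Q_j)^2$, the Pythagorean arrangement $\mathcal{H}(\Phi;\mathbf{Q})$ consists of the hyperplanes $h(e)=\{P\in\mathbb{E}^d:\psi_{ij}(P)=\phi(e;i,j)\}$, one per edge $e$ with endpoints $i,j$. *)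

From HB Require Import structures.
From mathcomp Require Import all_boot all_order all_algebra.
From mathcomp Require Import boolp classical_sets reals.
Set Implicit Arguments. Unset Strict Implicit. Unset Printing Implicit Defensive.
Import Order.TTheory GRing.Theory Num.Theory.
Local Open Scope ring_scope.
Local Open Scope classical_set_scope.

Section Defs.
Variable R : realType.
Variable d : nat.

(* Points of E^d are row vectors 'rV[R]_d; points of E^{d+1} are pairs (x, z). *)
Definition dotp (u v : 'rV[R]_d) : R := \sum_(k < d) u 0 k * v 0 k.
Definition sqdist (P Q : 'rV[R]_d) : R := dotp (P - Q) (P - Q).

Definition nonvertical_hyperplane (T : set ('rV[R]_d * R)) : Prop :=
  exists (w : 'rV[R]_d) (w0 b : R), w0 != 0 /\
    T = [set p | dotp w p.1 + w0 * p.2 = b].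

Definition translate (T : set ('rV[R]_d * R)) (v : 'rV[R]_d * R) :
  set ('rV[R]_d * R) := [set p | T (p.1 - v.1, p.2 - v.2)].

Definition parallel (T1 T2 : set ('rV[R]_d * R)) : Prop :=
  exists v, translate T1 v = T2.

(* tangent hyperplane to the paraboloid S : z = |x|^2 at the lift P^* of P *)
Definition tangentS (P : 'rV[R]_d) : set ('rV[R]_d * R) :=
  [set p | p.2 = dotp P P + 2 * dotp P (p.1 - P)].

Definition vproj (A : set ('rV[R]_d * R)) : set 'rV[R]_d := fst @` A.

Definition derived_arr (n : nat) (T : 'I_n -> set ('rV[R]_d * R)) :
  set (set 'rV[R]_d) :=
  [set h | exists i j : 'I_n, (i < j)%N /\ h = vproj (T i `&` T j)].

(* real additive gain graphs on vertex set 'I_n (multiple edges allowed) *)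
Record gain_graph (n : nat) := GainGraph {
  edge : finType;
  ends : edge -> 'I_n * 'I_n;         (* chosen orientation (i, j) of e *)
  gain : edge -> R;                    (* phi(e; i, j) for ends e = (i, j) *)
  ends_neq : forall e, (ends e).1 != (ends e).2 }.

Definition joins n (G : gain_graph n) (e : edge G) (i j : 'I_n) : bool :=
  (ends e == (i, j)) || (ends e == (j, i)).

Definition phi n (G : gain_graph n) (e : edge G) (i j : 'I_n) : R :=
  if ends e == (i, j) then gain e else - gain e.

Definition balanced n (G : gain_graph n) : Prop :=
  forall (k : nat) (v : 'I_k -> 'I_n) (es : 'I_k -> edge G),
    (2 <= k)%N -> injective v -> injective es ->
    (forall m, joins (es m) (v m) (v (ordS m))) ->
    \sum_(m < k) phi (es m) (v m) (v (ordS m)) = 0.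

Definition complete n (G : gain_graph n) : Prop :=
  forall i j : 'I_n, i != j -> exists e : edge G, joins e i j.

Definition psi n (Q : 'I_n -> 'rV[R]_d) (i j : 'I_n) (P : 'rV[R]_d) : R :=
  sqdist P (Q i) - sqdist P (Q j).

Definition pyth_hyp n (G : gain_graph n) (Q : 'I_n -> 'rV[R]_d) (e : edge G) :
  set 'rV[R]_d :=
  [set P | psi Q (ends e).1 (ends e).2 P = gain e].

Definition pyth_arr n (G : gain_graph n) (Q : 'I_n -> 'rV[R]_d) :
  set (set 'rV[R]_d) := [set h | exists e : edge G, h = pyth_hyp Q e].

End Defs.

From HB Require Import structures.
From mathcomp Require Import all_boot all_order all_algebra.
From mathcomp Require Import boolp classical_sets reals.
From mathcomp Require Import ring lra.
Set Implicit Arguments. Unset Strict Implicit.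
Import Order.TTheory GRing.Theory Num.Theory.
Local Open Scope ring_scope.
Local Open Scope classical_set_scope.

(* Every nonvertical hyperplane with a translate tangent to S at Q^* is that
   tangent raised by some height c, and the vertical projection of the
   intersection of the tangents at Q_i^* and Q_j^* raised by c_i and c_j is
   the hyperplane psi_ij = c_i - c_j.  Hence the arrangements {h_ij} are
   exactly the Pythagorean arrangements whose gains are differences of a
   potential c; on a complete graph these are the balanced gains, the
   potential being read off the edges at a fixed vertex. *)

Section Geometry.
Variables (R : realType) (d : nat).
Implicit Types (u v w P Q : 'rV[R]_d) (c : R).

Lemma dotpC u v : dotp u v = dotp v u.
Proof. by apply: eq_bigr => k _; rewrite mulrC. Qed.

Lemma dotpBr u v w : dotp u (v - w) = dotp u v - dotp u w.
Proof. by rewrite /dotp -sumrB; apply: eq_bigr => k _; rewrite !mxE mulrBr. Qed.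

Lemma dotpBl u v w : dotp (v - w) u = dotp v u - dotp w u.
Proof. by rewrite dotpC dotpBr !(dotpC u). Qed.

Lemma dotp0r u : dotp u 0 = 0.
Proof. by rewrite /dotp big1 // => k _; rewrite mxE mulr0. Qed.

Lemma dotpNr u v : dotp u (- v) = - dotp u v.
Proof. by rewrite -sub0r dotpBr dotp0r sub0r. Qed.

Lemma dotpZl u v c : dotp (c *: v) u = c * dotp v u.
Proof. by rewrite /dotp mulr_sumr; apply: eq_bigr => k _; rewrite !mxE mulrA. Qed.

Lemma dotp_eq0 u : dotp u u = 0 -> u = 0.
Proof.
move=> u0; apply/rowP => k; rewrite mxE.
have sq_ge0 (i : 'I_d) : xpredT i -> 0 <= u 0 i * u 0 i by rewrite -expr2 sqr_ge0.
have /eqP := @psumr_eq0P _ _ xpredT (fun i => u 0 i * u 0 i) sq_ge0 u0 k isT.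
by rewrite mulf_eq0 orbb => /eqP.
Qed.

Lemma sqdistE P Q : sqdist P Q = dotp P P - 2 * dotp Q P + dotp Q Q.
Proof. rewrite /sqdist !dotpBl !dotpBr (dotpC Q P); lra. Qed.

Definition raised_tangent Q c : set ('rV[R]_d * R) :=
  [set p | p.2 = 2 * dotp Q p.1 - dotp Q Q + c].

Lemma tangentS_raised Q : tangentS Q = raised_tangent Q 0.
Proof.
apply/funext => p; apply/propext; rewrite /tangentS /raised_tangent /= dotpBr.
by split=> E; lra.
Qed.

Lemma translate_raised_tangent Q c (v : 'rV[R]_d * R) :
  translate (raised_tangent Q c) v = raised_tangent Q (c + v.2 - 2 * dotp Q v.1).
Proof.
apply/funext => p; apply/propext; rewrite /translate /raised_tangent /= dotpBr.
by split=> E; lra.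
Qed.

Lemma translateK (T : set ('rV[R]_d * R)) (v : 'rV[R]_d * R) :
  translate (translate T v) (- v) = T.
Proof. by apply/funext => -[x z]; rewrite /translate /= !opprK !addrK. Qed.

Lemma translate_tangentS (T : set ('rV[R]_d * R)) Q (v : 'rV[R]_d * R) :
  translate T v = tangentS Q -> T = raised_tangent Q (2 * dotp Q v.1 - v.2).
Proof.
move=> Tv; rewrite -(translateK T v) Tv tangentS_raised translate_raised_tangent.
by congr raised_tangent; rewrite /= dotpNr; lra.
Qed.

Lemma raised_tangent_nonvertical Q c : nonvertical_hyperplane (raised_tangent Q c).
Proof.
exists ((-2) *: Q), 1, (c - dotp Q Q); split; first exact: oner_neq0.
apply/funext => -[x z]; apply/propext; rewrite /raised_tangent /= dotpZl.
by split=> E; lra.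
Qed.

(* Two raised tangents are equal only if their heights over x differ by a
   constant; comparing x = 0 with x = Q - Q' forces |Q - Q'|^2 = 0. *)
Lemma raised_tangent_inj Q Q' c c' :
  raised_tangent Q c = raised_tangent Q' c' -> Q = Q'.
Proof.
move=> EQ.
have height x : 2 * dotp Q x - dotp Q Q + c = 2 * dotp Q' x - dotp Q' Q' + c'.
  by have : raised_tangent Q c (x, 2 * dotp Q x - dotp Q Q + c) by []; rewrite EQ.
have := height (Q - Q'); have := height 0; rewrite !dotpBr !dotp0r (dotpC Q Q').
move=> h0 h1; apply/eqP; rewrite -subr_eq0; apply/eqP/dotp_eq0.
rewrite dotpBl !dotpBr (dotpC Q Q'); lra.
Qed.

Lemma raised_tangent_parallel Q Q' c c' :
  parallel (raised_tangent Q c) (raised_tangent Q' c') -> Q = Q'.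
Proof. by case=> v; rewrite translate_raised_tangent => /raised_tangent_inj. Qed.

Lemma vproj_raised_tangentI Q Q' c c' :
  vproj (raised_tangent Q c `&` raised_tangent Q' c') =
  [set P | sqdist P Q - sqdist P Q' = c - c'].
Proof.
apply/funext => P; apply/propext; rewrite /raised_tangent /= !sqdistE; split.
  by case=> -[x z] [/= h h'] <-; lra.
by move=> E; exists (P, 2 * dotp Q P - dotp Q Q + c) => //; split=> /=; lra.
Qed.

End Geometry.

Section GainGraphs.
Variables (R : realType) (n : nat) (G : gain_graph R n).
Implicit Types (e f g : edge G) (i j l : 'I_n) (c : 'I_n -> R).

Lemma joins_neq e i j : joins e i j -> i != j.
Proof. by case/orP=> /eqP E; have := ends_neq e; rewrite E // eq_sym. Qed.

Lemma joinsC e i j : joins e i j -> joins e j i.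
Proof. by rewrite /joins orbC. Qed.

Lemma joins_ends e : joins e (ends e).1 (ends e).2.
Proof. by rewrite /joins -surjective_pairing eqxx. Qed.

Lemma joins_eq e i j i' j' :
  joins e i j -> joins e i' j' -> (i = i' /\ j = j') \/ (i = j' /\ j = i').
Proof. by rewrite /joins => /orP[] /eqP -> /orP[] /eqP [] -> ->; tauto. Qed.

Lemma phi_ends e : phi e (ends e).1 (ends e).2 = gain e.
Proof. by rewrite /phi -surjective_pairing eqxx. Qed.

Lemma phiC e i j : joins e i j -> phi e j i = - phi e i j.
Proof.
move=> eij; have /negbTE ij := joins_neq eij; have /negbTE ji := joins_neq (joinsC eij).
rewrite /phi; case/orP: eij => /eqP ->; by rewrite !xpair_eqE ij ji !eqxx /= ?opprK.
Qed.

Lemma phi_potential c e i j :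
  gain e = c (ends e).1 - c (ends e).2 -> joins e i j -> phi e i j = c i - c j.
Proof.
move=> gc eij; case/orP: (eij) => /eqP E; rewrite E /= in gc.
  by rewrite /phi E eqxx.
by rewrite (phiC (joinsC eij)) /phi E eqxx gc opprB.
Qed.

Lemma potential_balanced c :
  (forall e, gain e = c (ends e).1 - c (ends e).2) -> balanced G.
Proof.
move=> gc k v es _ _ _ circ.
rewrite (eq_bigr (fun m => c (v m) - c (v (ordS m)))); last first.
  by move=> m _; exact: phi_potential (circ m).
by rewrite sumrB (reindex_inj (@ordS_inj k)) subrr.
Qed.

Hypothesis balG : balanced G.

Lemma balanced_parallel_edges e f i j :
  joins e i j -> joins f i j -> phi e i j = phi f i j.
Proof.
move=> eij fij; have ij := joins_neq eij.
have [-> // | ef] := eqVneq e f.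
pose v (m : 'I_2) := if val m == 0%N then i else j.
pose es (m : 'I_2) := if val m == 0%N then e else f.
have v_inj : injective v.
  move=> [[|[|?]] ?] [[|[|?]] ?]; rewrite /v /= => E;
  first [exact: val_inj | by [] | by move: ij; rewrite E eqxx].
have es_inj : injective es.
  move=> [[|[|?]] ?] [[|[|?]] ?]; rewrite /es /= => E;
  first [exact: val_inj | by [] | by move: ef; rewrite E eqxx].
have circ m : joins (es m) (v m) (v (ordS m)).
  by case: m => -[|[|?]] ?; rewrite /es /v //=; exact: joinsC.
have := @balG _ v es isT v_inj es_inj circ.
rewrite !big_ord_recl big_ord0 /= (phiC fij) /es /v /=; lra.
Qed.

Lemma balanced_triangle e f g i j l :
  joins e i j -> joins f j l -> joins g l i -> i != l ->
  phi e i j + phi f j l + phi g l i = 0.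
Proof.
move=> eij fjl gli il; have ij := joins_neq eij; have jl := joins_neq fjl.
pose v (m : 'I_3) := if val m == 0%N then i else if val m == 1%N then j else l.
pose es (m : 'I_3) := if val m == 0%N then e else if val m == 1%N then f else g.
have v_inj : injective v.
  move=> [[|[|[|?]]] ?] [[|[|[|?]]] ?]; rewrite /v /= => E;
  first [exact: val_inj | by [] | by move: ij jl il; rewrite E eqxx].
(* An edge joins only one pair, and the three pairs of vertices are distinct. *)
have es_inj : injective es.
  move=> [[|[|[|?]]] ?] [[|[|[|?]]] ?]; rewrite /es /= => E;
  first [exact: val_inj | by [] | subst;
    first [case: (joins_eq eij fjl) | case: (joins_eq fjl gli)
          | case: (joins_eq eij gli)];
    by case=> E1 E2; move: ij jl il; rewrite ?E1 ?E2 eqxx].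
have circ m : joins (es m) (v m) (v (ordS m)) by case: m => -[|[|[|?]]].
have := @balG _ v es isT v_inj es_inj circ.
by rewrite !big_ord_recl big_ord0 /= addr0 addrA.
Qed.

End GainGraphs.

(* The potential is phi(e; i, 0) for any edge e from i to the vertex 0. *)
Lemma balanced_complete_potential (R : realType) n (G : gain_graph R n) :
  balanced G -> complete G ->
  exists c : 'I_n -> R,
    forall (e : edge G) i j, joins e i j -> phi e i j = c i - c j.
Proof.
case: n G => [|m] G balG completeG; first by exists (fun=> 0) => ? [].
have pot_at i : exists r : R, (i = ord0 -> r = 0) /\
    forall e : edge G, joins e i ord0 -> phi e i ord0 = r.
  have [-> | i0] := eqVneq i ord0.
    by exists 0; split=> // e /joins_neq; rewrite eqxx.
  have [e0 e0i] := completeG i ord0 i0; exists (phi e0 i ord0); split.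
    by move=> E; rewrite E eqxx in i0.
  by move=> e ei; exact: (balanced_parallel_edges balG ei e0i).
have [c hc] := choice pot_at; exists c => e i j eij.
have c0 : c ord0 = 0 by exact: (hc ord0).1.
have [j0 | j0] := eqVneq j ord0.
  by move: eij; rewrite j0 c0 subr0 => /(hc i).2.
have [i0 | i0] := eqVneq i ord0.
  by move: eij; rewrite i0 c0 sub0r => /joinsC eji; rewrite (phiC eji) (hc j).2.
have [g gj] := completeG j ord0 j0.
have [f fi] : exists f : edge G, joins f ord0 i by apply: completeG; rewrite eq_sym.
have := balanced_triangle balG eij gj fi i0.
rewrite ((hc j).2 g gj) (phiC (joinsC fi)) ((hc i).2 f (joinsC fi)).
by set x := phi e i j; lra.
Qed.

Section PotentialGraph.
Variables (R : realType) (n : nat) (c : 'I_n -> R).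

Definition ordered_pair := {p : 'I_n * 'I_n | (p.1 < p.2)%N}.

Lemma ordered_pair_neq (p : ordered_pair) : (val p).1 != (val p).2.
Proof. by case: p => -[i j] /= ij; rewrite neq_ltn ij. Qed.

Definition potential_graph : gain_graph R n :=
  @GainGraph R n ordered_pair val (fun p => c (val p).1 - c (val p).2)
    ordered_pair_neq.

Lemma potential_graph_complete : complete potential_graph.
Proof.
move=> i j; rewrite neq_ltn => /orP[ij | ji].
  by exists (exist _ (i, j) ij); rewrite /joins /= eqxx.
by exists (exist _ (j, i) ji); rewrite /joins /= eqxx orbT.
Qed.

Lemma potential_graph_balanced : balanced potential_graph.
Proof. exact: potential_balanced. Qed.

End PotentialGraph.

Lemma pyth_arr_derived (R : realType) d n (G : gain_graph R n)
    (Q : 'I_n -> 'rV[R]_d) (T : 'I_n -> set ('rV[R]_d * R)) :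
  complete G ->
  (forall e : edge G, pyth_hyp Q e = vproj (T (ends e).1 `&` T (ends e).2)) ->
  pyth_arr G Q = derived_arr T.
Proof.
move=> completeG hyp; apply/funext => h; apply/propext; split.
  case=> e ->; rewrite hyp; have := ends_neq e.
  case: (ends e) => i j /=; rewrite neq_ltn => /orP[ij | ji].
    by exists i, j.
  by exists j, i; rewrite setIC.
case=> i [j [ij ->]].
have [e /orP[] /eqP E] := completeG i j (negbT (ltn_eqF ij)).
  by exists e; rewrite hyp E.
by exists e; rewrite hyp E setIC.
Qed.

Lemma pyth_hyp_raised (R : realType) d n (G : gain_graph R n)
    (Q : 'I_n -> 'rV[R]_d) (c : 'I_n -> R) (e : edge G) :
  gain e = c (ends e).1 - c (ends e).2 ->
  pyth_hyp Q e = vproj (raised_tangent (Q (ends e).1) (c (ends e).1)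
                        `&` raised_tangent (Q (ends e).2) (c (ends e).2)).
Proof. by move=> gc; rewrite vproj_raised_tangentI /pyth_hyp gc. Qed.

Theorem proposition9p2 (R : realType) (d n : nat) :
  (* (a) *)
  (forall (T : 'I_n -> set ('rV[R]_d * R)) (Q : 'I_n -> 'rV[R]_d),
     (forall i, nonvertical_hyperplane (T i)) ->
     (forall i j, i != j -> ~ parallel (T i) (T j)) ->
     (forall i, exists v, translate (T i) v = tangentS (Q i)) ->
     exists Psi : gain_graph R n,
       balanced Psi /\ complete Psi /\ pyth_arr Psi Q = derived_arr T) /\
  (* (b) *)
  (forall (Phi : gain_graph R n) (Q : 'I_n -> 'rV[R]_d),
     balanced Phi -> complete Phi -> injective Q ->
     exists T : 'I_n -> set ('rV[R]_d * R),
       (forall i, nonvertical_hyperplane (T i)) /\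
       (forall i j, i != j -> ~ parallel (T i) (T j)) /\
       (forall i, exists v, translate (T i) v = tangentS (Q i)) /\
       pyth_arr Phi Q = derived_arr T).
Proof.
split.
  move=> T Q _ _ /choice[v tangentT].
  pose c i := 2 * dotp (Q i) (v i).1 - (v i).2.
  have TE i : T i = raised_tangent (Q i) (c i) by exact: translate_tangentS.
  exists (potential_graph c); split; first exact: potential_graph_balanced.
  split; first exact: potential_graph_complete.
  apply: pyth_arr_derived; first exact: potential_graph_complete.
  by move=> e; rewrite !TE; exact: pyth_hyp_raised.
move=> Phi Q balPhi completePhi Qinj.
have [c pot] := balanced_complete_potential balPhi completePhi.
exists (fun i => raised_tangent (Q i) (c i)); split; last split; last split.
- by move=> i; exact: raised_tangent_nonvertical.
- by move=> i j ij /raised_tangent_parallel /Qinj E; rewrite E eqxx in ij.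
- by move=> i; exists (0, - c i); rewrite tangentS_raised translate_raised_tangent
    /= dotp0r mulr0 subr0 addrN.
apply: pyth_arr_derived => // e; apply: pyth_hyp_raised.
by rewrite -phi_ends (pot e _ _ (joins_ends e)).
Qed.
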